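(* Let $m\ge2$ be even, $\beta>1$, and let $E_{\mathrm{hsc},m}$ be the $m\times2$ matrix whose $j$-th row is $(\cos(j\pi/m),\sin(j\pi/m))$. Let $E_1,E_2$ be its first and last $m/2$ rows, $v_\beta:=(\beta^{-1},\dots,\beta^{-m/2})$, and let $W$ be the $2\times2$ matrix with rows $v_\beta E_1$ and $v_\beta E_2$. Then $$\sigma_{\min}(W)=\|v_\beta E_1\|_2=\frac{(1+\beta^{-m})^{1/2}}{|\beta-e^{\pi i/m}|}\ \ge\ \beta^{-1},$$ with equality in the last inequality if and only if $m=2$.
   Context: $\sigma_{\min}$ denotes the smallest singular value. *)

From Stdlib Require Import Reals Lra Lia.
Open Scope R_scope.

Fixpoint rsum (n : nat) (f : nat -> R) : R :=
  match n with
  | O => 0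
  | S p => rsum p f + f p
  end.

Record M2 := mkM2 { e11 : R; e12 : R; e21 : R; e22 : R }.

Definition M2tr (A : M2) : M2 := mkM2 (e11 A) (e21 A) (e12 A) (e22 A).

Definition M2mul (A B : M2) : M2 :=
  mkM2 (e11 A * e11 B + e12 A * e21 B) (e11 A * e12 B + e12 A * e22 B)
       (e21 A * e11 B + e22 A * e21 B) (e21 A * e12 B + e22 A * e22 B).

Definition is_eigenvalue (A : M2) (lam : R) : Prop :=
  exists x1 x2 : R, (x1 <> 0 \/ x2 <> 0) /\
    e11 A * x1 + e12 A * x2 = lam * x1 /\
    e21 A * x1 + e22 A * x2 = lam * x2.

Definition is_singular_value (W : M2) (s : R) : Prop :=
  0 <= s /\ is_eigenvalue (M2mul (M2tr W) W) (s ^ 2).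

Definition is_sigma_min (W : M2) (s : R) : Prop :=
  is_singular_value W s /\ forall t, is_singular_value W t -> s <= t.

Definition norm2 (a b : R) : R := sqrt (a ^ 2 + b ^ 2).

(* |z| for the complex number z = a + b i *)
Definition cmod (a b : R) : R := sqrt (a ^ 2 + b ^ 2).

Definition Ehsc_row1 (m j : nat) : R := cos (INR j * PI / INR m).
Definition Ehsc_row2 (m j : nat) : R := sin (INR j * PI / INR m).

(* v_beta E_1 = sum_{j=1}^{m/2} beta^{-j} * row j ;
   v_beta E_2 = sum_{j=1}^{m/2} beta^{-j} * row (m/2 + j) *)
Definition vE1 (m : nat) (beta : R) : R * R :=
  (rsum (m / 2) (fun i => / beta ^ (i + 1) * Ehsc_row1 m (i + 1)),
   rsum (m / 2) (fun i => / beta ^ (i + 1) * Ehsc_row2 m (i + 1))).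

Definition vE2 (m : nat) (beta : R) : R * R :=
  (rsum (m / 2) (fun i => / beta ^ (i + 1) * Ehsc_row1 m (m / 2 + (i + 1))),
   rsum (m / 2) (fun i => / beta ^ (i + 1) * Ehsc_row2 m (m / 2 + (i + 1)))).

Definition Wmat (m : nat) (beta : R) : M2 :=
  mkM2 (fst (vE1 m beta)) (snd (vE1 m beta)) (fst (vE2 m beta)) (snd (vE2 m beta)).

(* The last m/2 rows of E_hsc,m are the first m/2 rows rotated by π/2, so W = [[a, b], [-b, a]]
   is a scaled rotation: W^T W = (a^2 + b^2) I and every singular value of W equals
   ‖v_β E_1‖ = sqrt (a^2 + b^2).  In complex form v_β E_1 = z + ... + z^n with n = m/2 and
   z = e^{iπ/m}/β; as z^n = i β^{-n} is orthogonal to 1, the geometric sum formula gives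
   |1 - z|^2 ‖v_β E_1‖^2 = β^{-2} (1 + β^{-m}), i.e. ‖v_β E_1‖^2 = (1 + β^{-m}) / |β - e^{iπ/m}|^2.
   Finally |β - e^{iπ/m}|^2 = β^2 - 2β cos(π/m) + 1 is β^2 + 1 for m = 2 and, since
   cos(π/m) > 1/2 for m >= 4, smaller than β^2 otherwise. *)

From Stdlib Require Import Reals Lra Lia.
Open Scope R_scope.

Lemma rsum_ext n f g : (forall i, (i < n)%nat -> f i = g i) -> rsum n f = rsum n g.
Proof.
  induction n as [|n IH]; simpl; intros Hfg; [reflexivity|].
  rewrite IH by (intros; apply Hfg; lia). rewrite Hfg by lia. reflexivity.
Qed.

Lemma rsum_opp n f : rsum n (fun i => - f i) = - rsum n f.
Proof. induction n as [|n IH]; simpl; [ring | rewrite IH; ring]. Qed.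

Lemma M2gram_rotscale a b :
  M2mul (M2tr (mkM2 a b (- b) a)) (mkM2 a b (- b) a)
  = mkM2 (a ^ 2 + b ^ 2) 0 0 (a ^ 2 + b ^ 2).
Proof. unfold M2mul, M2tr; simpl; f_equal; ring. Qed.

Lemma is_eigenvalue_scalar d lam : is_eigenvalue (mkM2 d 0 0 d) lam <-> lam = d.
Proof.
  split.
  - intros [x1 [x2 [Hx [E1 E2]]]]; simpl in E1, E2.
    destruct Hx as [Hx | Hx]; [apply (Rmult_eq_reg_r x1) | apply (Rmult_eq_reg_r x2)];
      auto; lra.
  - intros ->. exists 1, 0. simpl. split; [left; lra | split; ring].
Qed.

Lemma is_sigma_min_rotscale a b : is_sigma_min (mkM2 a b (- b) a) (norm2 a b).
Proof.
  unfold is_sigma_min, is_singular_value, norm2.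
  rewrite M2gram_rotscale.
  assert (Hsq : sqrt (a ^ 2 + b ^ 2) ^ 2 = a ^ 2 + b ^ 2) by (apply pow2_sqrt; nra).
  split.
  - split; [apply sqrt_pos | apply is_eigenvalue_scalar, Hsq].
  - intros t [Ht Et]. apply is_eigenvalue_scalar in Et.
    rewrite <- Et, sqrt_pow2 by exact Ht. lra.
Qed.

(* In complex form: with z = r e^{i θ}, (1 - z) (z + ... + z^k) = z - z^(k+1). *)
Lemma trig_geom_sum r th k :
  let A := rsum k (fun i => r ^ (i + 1) * cos (INR (i + 1) * th)) in
  let B := rsum k (fun i => r ^ (i + 1) * sin (INR (i + 1) * th)) in
  (1 - r * cos th) * A + r * sin th * B
    = r * cos th - r ^ (k + 1) * cos (INR (k + 1) * th) /\
  (1 - r * cos th) * B - r * sin th * A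
    = r * sin th - r ^ (k + 1) * sin (INR (k + 1) * th).
Proof.
  induction k as [|k [IH1 IH2]]; simpl rsum.
  - simpl. rewrite !Rmult_1_l, !Rmult_1_r. split; ring.
  - replace (S k + 1)%nat with (S (k + 1)) by lia.
    replace (INR (S (k + 1)) * th) with (INR (k + 1) * th + th) by (rewrite S_INR; ring).
    rewrite cos_plus, sin_plus. simpl pow. split; nra.
Qed.

Lemma trig_geom_sum_sqr r th k :
  let A := rsum k (fun i => r ^ (i + 1) * cos (INR (i + 1) * th)) in
  let B := rsum k (fun i => r ^ (i + 1) * sin (INR (i + 1) * th)) in
  ((1 - r * cos th) ^ 2 + (r * sin th) ^ 2) * (A ^ 2 + B ^ 2)
    = r ^ 2 * ((1 - r ^ k * cos (INR k * th)) ^ 2 + (r ^ k * sin (INR k * th)) ^ 2).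
Proof.
  intros A B. destruct (trig_geom_sum r th k) as [G1 G2]; fold A B in G1, G2.
  assert (Hangle : INR (k + 1) * th = INR k * th + th) by (rewrite plus_INR, INR_1; ring).
  assert (Hpow : r ^ (k + 1) = r * r ^ k) by (rewrite Nat.add_1_r; reflexivity).
  rewrite Hangle, Hpow in G1, G2. rewrite cos_plus in G1. rewrite sin_plus in G2.
  pose proof (sin2_cos2 th) as Hcs; unfold Rsqr in Hcs.
  transitivity (((1 - r * cos th) * A + r * sin th * B) ^ 2
                + ((1 - r * cos th) * B - r * sin th * A) ^ 2); [ring|].
  rewrite G1, G2.
  transitivity (r ^ 2 * (sin th * sin th + cos th * cos th)
                * ((1 - r ^ k * cos (INR k * th)) ^ 2 + (r ^ k * sin (INR k * th)) ^ 2));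
    [ring | rewrite Hcs; ring].
Qed.

Lemma half_double n : (2 * n / 2 = n)%nat.
Proof. rewrite Nat.mul_comm. apply Nat.div_mul. lia. Qed.

Lemma hsc_angle_shift n j : n <> 0%nat ->
  INR (n + j) * PI / INR (2 * n) = PI / 2 + INR j * PI / INR (2 * n).
Proof.
  intros Hn. assert (INR n <> 0) by (apply not_0_INR; exact Hn).
  rewrite plus_INR, mult_INR. simpl INR. field. auto.
Qed.

Lemma Ehsc_row1_shift n j : n <> 0%nat ->
  Ehsc_row1 (2 * n) (n + j) = - Ehsc_row2 (2 * n) j.
Proof.
  intros Hn. unfold Ehsc_row1, Ehsc_row2.
  rewrite hsc_angle_shift, cos_plus, cos_PI2, sin_PI2 by exact Hn. ring.
Qed.

Lemma Ehsc_row2_shift n j : n <> 0%nat ->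
  Ehsc_row2 (2 * n) (n + j) = Ehsc_row1 (2 * n) j.
Proof.
  intros Hn. unfold Ehsc_row1, Ehsc_row2.
  rewrite hsc_angle_shift, sin_plus, cos_PI2, sin_PI2 by exact Hn. ring.
Qed.

Lemma Wmat_rotscale n beta : n <> 0%nat ->
  Wmat (2 * n) beta = mkM2 (fst (vE1 (2 * n) beta)) (snd (vE1 (2 * n) beta))
                           (- snd (vE1 (2 * n) beta)) (fst (vE1 (2 * n) beta)).
Proof.
  intros Hn. unfold Wmat, vE2, vE1; cbn [fst snd]. rewrite half_double, <- rsum_opp.
  f_equal; apply rsum_ext; intros i _.
  - rewrite Ehsc_row1_shift by exact Hn. ring.
  - rewrite Ehsc_row2_shift by exact Hn. reflexivity.
Qed.

Lemma vE1_trig_sums m beta :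
  vE1 m beta =
  (rsum (m / 2) (fun i => (/ beta) ^ (i + 1) * cos (INR (i + 1) * (PI / INR m))),
   rsum (m / 2) (fun i => (/ beta) ^ (i + 1) * sin (INR (i + 1) * (PI / INR m)))).
Proof.
  unfold vE1, Ehsc_row1, Ehsc_row2.
  f_equal; apply rsum_ext; intros i _; rewrite pow_inv; do 2 f_equal; unfold Rdiv; ring.
Qed.

Lemma cmod_sqr x y : cmod x y ^ 2 = x ^ 2 + y ^ 2.
Proof. unfold cmod. apply pow2_sqrt. nra. Qed.

Lemma vE1_sqr_norm n beta : n <> 0%nat -> 1 < beta ->
  let th := PI / INR (2 * n) in
  fst (vE1 (2 * n) beta) ^ 2 + snd (vE1 (2 * n) beta) ^ 2
  = (1 + / beta ^ (2 * n)) / cmod (beta - cos th) (- sin th) ^ 2.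
Proof.
  intros Hn Hb th. rewrite vE1_trig_sums, half_double, cmod_sqr. cbn [fst snd].
  pose proof (trig_geom_sum_sqr (/ beta) th n) as G; cbv zeta in G.
  assert (Hquarter : INR n * th = PI / 2)
    by (unfold th; rewrite mult_INR; simpl INR; field; apply not_0_INR; exact Hn).
  rewrite Hquarter, cos_PI2, sin_PI2 in G. fold th.
  replace (/ beta ^ (2 * n)) with (((/ beta) ^ n) ^ 2)
    by (rewrite <- pow_mult, Nat.mul_comm, pow_inv; reflexivity).
  pose proof (sin2_cos2 th) as Hcs; unfold Rsqr in Hcs.
  assert (Hc : cos th <= 1) by apply COS_bound.
  set (A := rsum _ (fun i => (/ beta) ^ (i + 1) * cos (INR (i + 1) * th))) in *.
  set (B := rsum _ (fun i => (/ beta) ^ (i + 1) * sin (INR (i + 1) * th))) in *.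
  assert (HD : 0 < (beta - cos th) ^ 2 + (- sin th) ^ 2) by nra.
  apply (Rmult_eq_reg_l (((beta - cos th) ^ 2 + (- sin th) ^ 2) / beta ^ 2));
    [| apply Rgt_not_eq, Rdiv_lt_0_compat; [exact HD | apply pow_lt; lra]].
  replace (((beta - cos th) ^ 2 + (- sin th) ^ 2) / beta ^ 2)
    with ((1 - / beta * cos th) ^ 2 + (/ beta * sin th) ^ 2) by (field; lra).
  rewrite G. field. split; lra.
Qed.

Lemma cmod_hsc_pos beta th : 1 < beta -> 0 < cmod (beta - cos th) (- sin th).
Proof.
  intros Hb. unfold cmod. apply sqrt_lt_R0.
  assert (cos th <= 1) by apply COS_bound. nra.
Qed.

Lemma sqrt_div_cmod a x y : 0 < cmod x y -> sqrt (a / cmod x y ^ 2) = sqrt a / cmod x y.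
Proof.
  intros Hc. rewrite sqrt_div_alt, sqrt_pow2 by (try apply pow_lt; lra). reflexivity.
Qed.

Lemma vE1_norm_closed_form n beta : n <> 0%nat -> 1 < beta ->
  let th := PI / INR (2 * n) in
  norm2 (fst (vE1 (2 * n) beta)) (snd (vE1 (2 * n) beta))
  = sqrt (1 + / beta ^ (2 * n)) / cmod (beta - cos th) (- sin th).
Proof.
  intros Hn Hb th. unfold norm2.
  rewrite vE1_sqr_norm by assumption. apply sqrt_div_cmod, cmod_hsc_pos, Hb.
Qed.

Lemma cos_PI_div_gt_half M : (4 <= M)%nat -> 1 / 2 < cos (PI / INR M).
Proof.
  intros HM. pose proof PI_RGT_0.
  assert (H4 : 4 <= INR M) by (replace 4 with (INR 4) by (simpl; ring); apply le_INR, HM).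
  assert (Hlt : PI / INR M < PI / 3).
  { apply Rmult_lt_compat_l; [lra|]. apply Rinv_lt_contravar; nra. }
  assert (Hpos : 0 < PI / INR M) by (apply Rdiv_lt_0_compat; lra).
  rewrite <- cos_PI3. apply cos_decreasing_1; lra.
Qed.

Lemma hsc_sqr_ratio_cases n beta : n <> 0%nat -> 1 < beta ->
  let th := PI / INR (2 * n) in
  let g := (1 + / beta ^ (2 * n)) / cmod (beta - cos th) (- sin th) ^ 2 in
  (n = 1%nat /\ g = / beta ^ 2) \/ ((2 <= n)%nat /\ / beta ^ 2 < g).
Proof.
  intros Hn Hb th g. unfold g. rewrite cmod_sqr.
  destruct (Nat.eq_dec n 1) as [-> | Hn1]; [left | right]; split; try lia.
  - replace th with (PI / 2) by (unfold th; simpl INR; f_equal; ring).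
    rewrite cos_PI2, sin_PI2. change (2 * 1)%nat with 2%nat. field. split; nra.
  - assert (Hc : 1 / 2 < cos th) by (apply cos_PI_div_gt_half; lia).
    pose proof (sin2_cos2 th) as Hcs; unfold Rsqr in Hcs.
    assert (Hu : 0 < / beta ^ (2 * n)) by (apply Rinv_0_lt_compat, pow_lt; lra).
    assert (Hc1 : cos th <= 1) by apply COS_bound.
    assert (HD : 0 < (beta - cos th) ^ 2 + (- sin th) ^ 2 < beta ^ 2).
    { assert (1 < 2 * beta * cos th) by nra. split; nra. }
    apply Rlt_le_trans with (1 / ((beta - cos th) ^ 2 + (- sin th) ^ 2)).
    + rewrite <- Rdiv_1_l. apply Rmult_lt_compat_l; [lra|]. apply Rinv_lt_contravar; nra.
    + unfold Rdiv. apply Rmult_le_compat_r; [apply Rlt_le, Rinv_0_lt_compat|]; lra.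
Qed.

Theorem mainTheorem4 (m : nat) (beta : R)
  (Hm : (2 <= m)%nat) (Heven : Nat.Even m) (Hbeta : 1 < beta) :
  let s := norm2 (fst (vE1 m beta)) (snd (vE1 m beta)) in
  let f := sqrt (1 + / beta ^ m) /
           cmod (beta - cos (PI / INR m)) (- sin (PI / INR m)) in
  is_sigma_min (Wmat m beta) s /\
  s = f /\
  / beta <= f /\
  (f = / beta <-> m = 2%nat).
Proof.
  intros s f. destruct Heven as [n ->].
  assert (Hn : n <> 0%nat) by lia.
  assert (Hsf : s = f) by (apply vE1_norm_closed_form; assumption).
  assert (Hinv : / beta = sqrt (/ beta ^ 2)).
  { rewrite <- pow_inv, sqrt_pow2; [reflexivity | left; apply Rinv_0_lt_compat; lra]. }
  assert (Hcases : (n = 1%nat /\ f = / beta) \/ ((2 <= n)%nat /\ / beta < f)).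
  { unfold f. rewrite <- sqrt_div_cmod by (apply cmod_hsc_pos, Hbeta).
    rewrite Hinv.
    destruct (hsc_sqr_ratio_cases n beta Hn Hbeta) as [[E Hg] | [E Hg]]; [left | right].
    - split; [exact E | f_equal; exact Hg].
    - split; [exact E | apply sqrt_lt_1_alt; split; [apply Rlt_le, Rinv_0_lt_compat, pow_lt; lra | exact Hg]]. }
  split; [rewrite Wmat_rotscale by exact Hn; apply is_sigma_min_rotscale |].
  split; [exact Hsf |].
  destruct Hcases as [[E Hf] | [E Hf]]; split; try lra; split; intros H; lia || lra.
Qed.
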